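(* Let $a,b,k$ be positive integers. There exists an integer $N=N(a,b,k)$ such that for every $n\ge N$, BoxWaiter has a winning strategy in the game $WCBox(n\times k,(a:b))$.
   Context: $WCBox(n\times k,(a:b))$ is the $(a:b)$ Waiter-Client game whose board is the disjoint union of $n$ sets (''boxes'') of size $k$ each and whose target sets are the boxes: in each round BoxWaiter selects $a+b$ unclaimed elements, BoxClient claims $a$ of them and BoxWaiter the rest (in the last round, if $t$ elements remain, BoxWaiter takes all if $t\le b$, otherwise BoxClient takes $t-b$ and BoxWaiter the rest). BoxWaiter wins if by the end BoxClient has claimed all elements of some box; otherwise BoxClient wins. *)

From mathcomp Require Import all_boot.
Set Implicit Arguments. Unset Strict Implicit. Unset Printing Implicit Defensive.

(* Board of WCBox(n x k, (a:b)): element (i, j) is the j-th element of box i. *)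
Definition box_board (n k : nat) : finType := ('I_n * 'I_k)%type.

Definition box (n k : nat) (i : 'I_n) : {set box_board n k} :=
  [set x : box_board n k | x.1 == i].

(* BoxWaiter wins (has a winning strategy) from the position where U is the set
   of unclaimed elements and C is the set of elements claimed by BoxClient.
   The inductive predicate is the least fixpoint, i.e. Waiter forces a win in
   the (finite) game. *)
Inductive waiter_wins (n k a b : nat) :
    {set box_board n k} -> {set box_board n k} -> Prop :=
| ww_end (C : {set box_board n k}) :
    (exists i : 'I_n, box k i \subset C) -> waiter_wins a b set0 C
| ww_round (U C : {set box_board n k}) :
    a + b <= #|U| ->
    (exists S : {set box_board n k},
        [/\ S \subset U, #|S| = a + b &
          forall A : {set box_board n k}, A \subset S -> #|A| = a ->
            waiter_wins a b (U :\: S) (C :|: A)]) ->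
    waiter_wins a b U C
| ww_last_waiter (U C : {set box_board n k}) :
    0 < #|U| -> #|U| < a + b -> #|U| <= b ->
    waiter_wins a b set0 C ->
    waiter_wins a b U C
| ww_last_client (U C : {set box_board n k}) :
    0 < #|U| -> #|U| < a + b -> b < #|U| ->
    (forall A : {set box_board n k}, A \subset U -> #|A| = #|U| - b ->
        waiter_wins a b set0 (C :|: A)) ->
    waiter_wins a b U C.

Definition BoxWaiter_wins (n k a b : nat) : Prop :=
  waiter_wins a b [set: box_board n k] set0.

From mathcomp Require Import all_boot zify.

Set Implicit Arguments. Unset Strict Implicit. Unset Printing Implicit Defensive.

(* Waiter fills the boxes column by column.  Call a box open at level j if
   Client owns its first j elements and the others are still free.  Offering
   the j-th elements of a+b boxes open at level j forces Client (a > 0) to take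
   one of them, so that box becomes open at level j+1; hence (a+b)^(m+1) boxes
   open at level j yield (a+b)^m boxes open at level j+1.  Starting from
   (a+b)^k empty boxes, some box is eventually owned by Client, and once this
   happens Waiter wins however the remaining rounds are played. *)

Lemma subset_of_card (T : finType) (A : {set T}) m :
  m <= #|A| -> exists2 S : {set T}, S \subset A & #|S| = m.
Proof.
move/card_geqP=> [s [s_uniq <- sA]]; exists [set x in s].
  by apply/subsetP=> x; rewrite inE; apply: sA.
by rewrite cardsE (card_uniqP s_uniq).
Qed.

Section BoxGame.

Variables n k a b : nat.
Implicit Types (U C S A : {set box_board n k}) (I T : {set 'I_n}).

Definition column T (j : 'I_k) : {set box_board n k} := [set (i, j) | i in T].

Lemma mem_column T j i j' : ((i, j') \in column T j) = (i \in T) && (j' == j).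
Proof.
apply/imsetP/andP => [[i' i'T [-> ->]] | [iT /eqP ->]]; first by [].
by exists i.
Qed.

Lemma card_column T j : #|column T j| = #|T|.
Proof. by rewrite card_imset // => i i' []. Qed.

Definition open_at U C (j : nat) (i : 'I_n) :=
  forall j' : 'I_k, (j' < j -> (i, j') \in C) /\ (j <= j' -> (i, j') \in U).

Lemma open_at_full U C i : open_at U C k i -> box k i \subset C.
Proof.
move=> iopen; apply/subsetP => -[i' j']; rewrite inE /= => /eqP ->.
by apply: (iopen j').1.
Qed.

Lemma open_at_untouched U C S A j i :
  (forall j', (i, j') \notin S) ->
  open_at U C j i -> open_at (U :\: S) (C :|: A) j i.
Proof.
move=> iS iopen j'; have [inC inU] := iopen j'; split=> [/inC | /inU] x_in.
  by rewrite inE x_in.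
by rewrite inE x_in andbT iS.
Qed.

Lemma open_at_claimed U C S A j (lt_jk : j < k) i :
  (i, Ordinal lt_jk) \in A ->
  (forall j' : 'I_k, (i, j') \in S -> j' = Ordinal lt_jk) ->
  open_at U C j i -> open_at (U :\: S) (C :|: A) j.+1 i.
Proof.
move=> iA iS iopen j'; have [inC inU] := iopen j'; split=> [lt_j'j1 | lt_jj'].
  rewrite inE; case: (ltnP j' j) => [/inC -> // | le_jj'].
  have -> : j' = Ordinal lt_jk by apply: val_inj => /=; lia.
  by rewrite iA orbT.
rewrite inE inU ?andbT; last exact: ltnW.
by apply/negP => /iS ej'; move: lt_jj'; rewrite ej' ltnn.
Qed.

Hypothesis a_gt0 : 0 < a.

Lemma waiter_wins_owned U C :
  (exists i, box k i \subset C) -> waiter_wins a b U C.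
Proof.
have [m] := ubnP #|U|; elim: m U C => // m IH U C ltUm [i iC].
have owned_after A : exists i, box k i \subset C :|: A.
  by exists i; apply: subset_trans iC (subsetUl _ _).
have [/eqP | U_gt0] := posnP #|U|.
  by rewrite cards_eq0 => /eqP ->; apply: ww_end; exists i.
have [le_abU | lt_Uab] := leqP (a + b) #|U|.
  apply: ww_round => //; have [S SU cardS] := subset_of_card le_abU.
  exists S; split=> // A _ _; apply: IH (owned_after A).
  by rewrite cardsDS //; lia.
have [le_Ub | lt_bU] := leqP #|U| b.
  by apply: ww_last_waiter => //; apply: ww_end; exists i.
by apply: ww_last_client => // A _ _; apply: ww_end.
Qed.

Lemma offer_column_round U C j (lt_jk : j < k) I I' T A :
  [disjoint I & I'] -> T \subset I ->
  {in I, forall i, open_at U C j i} -> {in I', forall i, open_at U C j.+1 i} ->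
  A \subset column T (Ordinal lt_jk) -> 0 < #|A| ->
  let S := column T (Ordinal lt_jk) in
  exists2 i0, i0 \in T &
    {in I :\: T, forall i, open_at (U :\: S) (C :|: A) j i} /\
    {in i0 |: I', forall i, open_at (U :\: S) (C :|: A) j.+1 i}.
Proof.
move=> dII' TI openI openI' AS /card_gt0P [[i0 j0] x0A] S.
have := subsetP AS _ x0A; rewrite mem_column => /andP [i0T /eqP ej0].
have notT i : i \notin T -> forall j', (i, j') \notin S.
  by move=> iT j'; rewrite mem_column (negbTE iT).
exists i0 => //; split=> i.
  by rewrite inE => /andP [iT iI]; apply: open_at_untouched (notT _ iT) (openI _ iI).
rewrite !inE => /orP [/eqP -> | iI'].
  apply: open_at_claimed (openI _ (subsetP TI _ i0T)); first by rewrite -ej0.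
  by move=> j'; rewrite mem_column => /andP [_ /eqP].
apply: open_at_untouched (openI' _ iI'); apply: notT.
by apply/negP => /(subsetP TI) /(disjointFr dII'); rewrite iI'.
Qed.

(* Each round moves one box from I (open at level j) to I' (open at level j+1),
   so t rounds suffice to gather M boxes in I'. *)
Lemma waiter_wins_advance j (lt_jk : j < k) M :
  (forall U C I', M <= #|I'| -> {in I', forall i, open_at U C j.+1 i} ->
     waiter_wins a b U C) ->
  forall t U C I I', [disjoint I & I'] -> (a + b) * t <= #|I| -> M <= #|I'| + t ->
  {in I, forall i, open_at U C j i} -> {in I', forall i, open_at U C j.+1 i} ->
  waiter_wins a b U C.
Proof.
move=> win_next; elim=> [|t IH] U C I I' dII' cardI cardI' openI openI'.
  by apply: (win_next _ _ I') => //; rewrite addn0 in cardI'.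
rewrite mulnS in cardI.
have [T TI cardT] := subset_of_card (leq_trans (leq_addr _ _) cardI).
pose S := column T (Ordinal lt_jk).
have cardS : #|S| = a + b by rewrite card_column.
have SU : S \subset U.
  apply/subsetP => -[i j']; rewrite mem_column => /andP [iT /eqP ->].
  by apply: (openI _ (subsetP TI _ iT) (Ordinal lt_jk)).2.
apply: ww_round; first by rewrite -cardS subset_leq_card.
exists S; split=> // A AS cardA.
have [|i0 i0T [openI1 openI1']] := offer_column_round dII' TI openI openI' AS.
  by rewrite cardA.
have i0I' : i0 \notin I' by rewrite (disjointFr dII') // (subsetP TI).
apply: (IH _ _ (I :\: T) (i0 |: I')) => //.
- rewrite -setI_eq0; apply/eqP/setP => i; rewrite !inE.
  case: (i =P i0) => [-> | _]; first by rewrite i0T.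
  by case: (boolP (i \in I')) => [/(disjointFl dII') -> | _]; rewrite !andbF.
- by rewrite cardsDS // cardT; lia.
- by rewrite cardsU1 i0I'; lia.
Qed.

Lemma waiter_wins_from_level m j U C I :
  j + m = k -> (a + b) ^ m <= #|I| -> {in I, forall i, open_at U C j i} ->
  waiter_wins a b U C.
Proof.
elim: m j U C I => [|m IH] j U C I.
  rewrite addn0 expn0 => -> /card_gt0P [i iI] openI.
  by apply: waiter_wins_owned; exists i; apply: open_at_full (openI _ iI).
move=> ejk cardI openI; have lt_jk : j < k by lia.
apply: (@waiter_wins_advance _ lt_jk ((a + b) ^ m) _ ((a + b) ^ m) U C I set0) => //.
- by move=> U' C' I'; apply: (IH j.+1); lia.
- by rewrite -setI_eq0 setI0.
- by rewrite -expnS.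
- by rewrite cards0.
- by move=> i; rewrite inE.
Qed.

End BoxGame.

Theorem mainTheorem17 (a b k : nat) :
  0 < a -> 0 < b -> 0 < k ->
  exists N : nat, forall n : nat, N <= n -> BoxWaiter_wins n k a b.
Proof.
move=> a_gt0 _ _; exists ((a + b) ^ k) => n le_N_n.
apply: (waiter_wins_from_level a_gt0 (j := 0) (I := [set: 'I_n])) => //.
  by rewrite cardsT card_ord.
by move=> i _ j'; split=> // _; apply: in_setT.
Qed.
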